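(* Let $\mathfrak{g}$ be an SRN under the Single-Objective Framework, with common storage $s$, common data size $d$, common budget $b$, and link cost $c$. Then $\mathfrak{g}$ is bilaterally stable with storage and budget constraints if and only if the following holds. For every pair of distinct agents $i,j$ with $\langle ij\rangle\notin\mathfrak{g}$: if $b-c\,\eta_i(\mathfrak{g})\ge c$ and $s-d\,\eta_j(\mathfrak{g})\ge d$, then $b-c\,\eta_j(\mathfrak{g})<c$ or $s-d\,\eta_i(\mathfrak{g})<d$.
   Context: A social storage network is a simple undirected graph $\mathfrak{g}$ on a finite set of agents; $\eta_i(\mathfrak{g})$ is the number of neighbours of $i$. The networks $\mathfrak{g}\pm\langle ij\rangle$ are obtained by adding or removing the link $\langle ij\rangle$. In the Single-Objective Framework the utility of agent $i$ is $u_i(\mathfrak{g})=\beta_i(1-\lambda^{\eta_i(\mathfrak{g})})$, where $\beta_i>0$ is the worth of $i$'s data and $\lambda\in(0,1)$ is the disk failure rate. An SRN (symmetric resource network) is such a network where every agent $i$ has: - offered storage $s_i=s$; - data size $d_i=d$; - budget $b_i=b$. The per-link cost is $c$. Remaining storage is $RS_i=s_i-\sum_{j\text{ neighbour of }i}d_j$ and remaining budget is $RB_i=b_i-c\,\eta_i(\mathfrak{g})$. $\mathfrak{g}$ is bilaterally stable with storage and budget constraints if both of the following hold. 1. For every link $\langle ij\rangle\in\mathfrak{g}$: if $u_i(\mathfrak{g}-\langle ij\rangle)>u_i(\mathfrak{g})$, then $u_j(\mathfrak{g}-\langle ij\rangle)<u_j(\mathfrak{g})$. 2. For every non-link $\langle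 ij\rangle$: if $u_i(\mathfrak{g}+\langle ij\rangle)>u_i(\mathfrak{g})$ and $RS_j\ge d_i$ and $RB_i\ge c$, then $u_j(\mathfrak{g}+\langle ij\rangle)<u_j(\mathfrak{g})$ or $RS_i<d_j$ or $RB_j<c$. *)

From HB Require Import structures.
From mathcomp Require Import all_boot all_order all_algebra.
Set Implicit Arguments. Unset Strict Implicit. Unset Printing Implicit Defensive.
Import Order.TTheory GRing.Theory Num.Theory.
Local Open Scope ring_scope.

Definition simple_graph (T : finType) (g : rel T) : Prop :=
  (forall i j, g i j = g j i) /\ (forall i, ~~ g i i).

Definition degree (T : finType) (g : rel T) (i : T) : nat := #|[set k | g i k]|.

Definition add_link (T : finType) (g : rel T) (i j : T) : rel T :=
  fun x y => [|| g x y, (x == i) && (y == j) | (x == j) && (y == i)].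
Definition del_link (T : finType) (g : rel T) (i j : T) : rel T :=
  fun x y => g x y && ~~ (((x == i) && (y == j)) || ((x == j) && (y == i))).

Definition util (R : realFieldType) (T : finType) (beta : T -> R) (lambda : R)
  (g : rel T) (i : T) : R := beta i * (1 - lambda ^+ degree g i).

Definition RS (R : realFieldType) (T : finType) (s d : T -> R) (g : rel T) (i : T) : R :=
  s i - \sum_(j | g i j) d j.

Definition RB (R : realFieldType) (T : finType) (b : T -> R) (c : R) (g : rel T) (i : T) : R :=
  b i - c * (degree g i)%:R.

(* Bilateral stability with storage and budget constraints. Links <ij> are
   between distinct agents; the conditions are required for every ordered pair. *)
Definition bilaterally_stable_sb (R : realFieldType) (T : finType)
  (beta : T -> R) (lambda : R) (s d b : T -> R) (c : R) (g : rel T) : Prop :=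
  (forall i j, i != j -> g i j ->
     util beta lambda (del_link g i j) i > util beta lambda g i ->
     util beta lambda (del_link g i j) j < util beta lambda g j) /\
  (forall i j, i != j -> ~~ g i j ->
     util beta lambda (add_link g i j) i > util beta lambda g i ->
     RS s d g j >= d i -> RB b c g i >= c ->
     [\/ util beta lambda (add_link g i j) j < util beta lambda g j,
         RS s d g i < d j | RB b c g j < c]).

(* Adding a link raises the degree of both endpoints and deleting one lowers it, while
   the utility beta_i (1 - lambda^eta) is strictly increasing in the degree. Hence no
   agent ever wants to drop a link, both endpoints always want to add one, and
   bilateral stability reduces to the storage and budget constraints, which in a
   symmetric network only depend on the degrees. *)
From HB Require Import structures.
From mathcomp Require Import all_boot all_order all_algebra.
Import Order.TTheory GRing.Theory Num.Theory.
Set Implicit Arguments. Unset Strict Implicit.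
Local Open Scope ring_scope.

Lemma eq_degree (T : finType) (g1 g2 : rel T) : g1 =2 g2 -> degree g1 =1 degree g2.
Proof. by move=> eqg x; apply: eq_card => k; rewrite !inE eqg. Qed.

Section Links.

Variables (T : finType) (g : rel T).

Lemma add_linkC i j : add_link g i j =2 add_link g j i.
Proof. by move=> x y; rewrite /add_link [X in g x y || X]orbC. Qed.

Lemma degree_add_link_l i j :
  i != j -> ~~ g i j -> degree (add_link g i j) i = (degree g i).+1.
Proof.
move=> neq_ij ngij; rewrite /degree.
have -> : [set k | add_link g i j i k] = j |: [set k | g i k].
  by apply/setP => k; rewrite !inE /add_link eqxx (negbTE neq_ij) orbF orbC.
by rewrite cardsU1 inE ngij.
Qed.

Lemma degree_del_link_l i j : g i j -> (degree (del_link g i j) i < degree g i)%N.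
Proof.
move=> gij; apply: proper_card; apply/properP; split.
  by apply/subsetP => k; rewrite !inE => /andP[].
by exists j; rewrite !inE // /del_link !eqxx andbF.
Qed.

Hypothesis sym_g : forall i j, g i j = g j i.

Lemma degree_add_link_r i j :
  i != j -> ~~ g i j -> degree (add_link g i j) j = (degree g j).+1.
Proof.
move=> neq_ij ngij; rewrite (eq_degree (add_linkC i j)) degree_add_link_l //.
  by rewrite eq_sym.
by rewrite sym_g.
Qed.

End Links.

Section Utility.

Variables (R : realFieldType) (T : finType) (beta : T -> R) (lambda : R).
Hypotheses (beta_gt0 : forall i, 0 < beta i) (lambda_in01 : 0 < lambda < 1).

Lemma util_lt_degree (g1 g2 : rel T) x :
  (degree g1 x < degree g2 x)%N -> util beta lambda g1 x < util beta lambda g2 x.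
Proof.
case/andP: lambda_in01 => lambda_gt0 lambda_lt1 lt_deg.
by rewrite /util ltr_pM2l // ltrD2l ltrN2 ltr_iXn2l.
Qed.

Lemma util_del_link_l (g : rel T) i j :
  g i j -> util beta lambda (del_link g i j) i < util beta lambda g i.
Proof. by move=> gij; apply/util_lt_degree/degree_del_link_l. Qed.

Lemma util_add_link_l (g : rel T) i j : i != j -> ~~ g i j ->
  util beta lambda g i < util beta lambda (add_link g i j) i.
Proof. by move=> neq_ij ngij; apply: util_lt_degree; rewrite degree_add_link_l. Qed.

Lemma util_add_link_r (g : rel T) i j : (forall x y, g x y = g y x) ->
  i != j -> ~~ g i j -> util beta lambda g j < util beta lambda (add_link g i j) j.
Proof. by move=> sym_g neq_ij ngij; apply: util_lt_degree; rewrite degree_add_link_r. Qed.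

End Utility.

Lemma RS_const_size (R : realFieldType) (T : finType) (s d : T -> R) (d0 : R)
  (g : rel T) x : (forall i, d i = d0) -> RS s d g x = s x - d0 * (degree g x)%:R.
Proof.
move=> d_const; rewrite /RS (eq_bigr (fun _ => d0)) // sumr_const mulr_natr.
by congr (_ - _ *+ _); apply: eq_card => k; rewrite inE.
Qed.

Theorem theorem3 (R : realFieldType) (T : finType) (g : rel T)
  (beta : T -> R) (lambda : R) (s0 d0 b0 c : R) (s d b : T -> R) :
  simple_graph g ->
  (forall i, 0 < beta i) -> 0 < lambda < 1 ->
  (forall i, s i = s0) -> (forall i, d i = d0) -> (forall i, b i = b0) ->
  bilaterally_stable_sb beta lambda s d b c g <->
  (forall i j, i != j -> ~~ g i j ->
     b0 - c * (degree g i)%:R >= c -> s0 - d0 * (degree g j)%:R >= d0 ->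
     b0 - c * (degree g j)%:R < c \/ s0 - d0 * (degree g i)%:R < d0).
Proof.
move=> [sym_g _] beta_gt0 lambda01 s_const d_const b_const.
have RSE x : RS s d g x = s0 - d0 * (degree g x)%:R.
  by rewrite (RS_const_size s g x d_const) s_const.
have RBE x : RB b c g x = b0 - c * (degree g x)%:R by rewrite /RB b_const.
split=> [[_ stable_add] i j ij ngij RBi RSj | constraints].
  have := stable_add i j ij ngij (util_add_link_l beta_gt0 lambda01 ij ngij).
  rewrite !RSE !RBE !d_const => /(_ RSj RBi) [lt_util | RSi | RBj]; [|by right|by left].
  by move: (util_add_link_r beta_gt0 lambda01 sym_g ij ngij); rewrite ltNge ltW.
split=> [i j _ gij | i j ij ngij _ RSj RBi].
  by rewrite ltNge ltW //; apply: util_del_link_l.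
rewrite RSE d_const in RSj; rewrite RBE in RBi.
by case: (constraints i j ij ngij RBi RSj) => [RBj|RSi];
  [apply: Or33; rewrite RBE | apply: Or32; rewrite RSE d_const].
Qed.
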